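(* Let $\mathscr C$ be a universally separable concept class on a measurable space $\Omega$ and $d\in\mathbb N$. The following are equivalent: (1) $\mathrm{VC}(\mathscr C\,\mathrm{mod}\,\omega_1)\le d$; (2) there is a countable set $N\subseteq\Omega$ such that $\mathrm{VC}(\mathscr C\restriction(\Omega\setminus N))\le d$.
   Context: $\mathscr C$ is universally separable if there is a countable $\mathscr C'\subseteq\mathscr C$ such that every $C\in\mathscr C$ is the pointwise limit of indicator functions of a sequence from $\mathscr C'$. $\mathrm{VC}(\mathscr C\restriction X)$ is the VC dimension of $\{C\cap X:C\in\mathscr C\}$. $\mathrm{VC}(\mathscr C\,\mathrm{mod}\,\omega_1)$ is the supremum of $n$ for which there exist uncountable sets $A_1,\dots,A_n\subseteq\Omega$ such that for every $J\subseteq\{1,\dots,n\}$ some $C\in\mathscr C$ contains $A_i$ for all $i\in J$ and is disjoint from $A_j$ for all $j\notin J$. *)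

From Stdlib Require Import List Arith Classical.
Import ListNotations.

Definition set (T : Type) := T -> Prop.

Definition is_sigma_algebra {Omega : Type} (Sigma : set (set Omega)) : Prop :=
  Sigma (fun _ => True) /\
  (forall A, Sigma A -> Sigma (fun x => ~ A x)) /\
  (forall A : nat -> set Omega, (forall n, Sigma (A n)) ->
     Sigma (fun x => exists n, A n x)).

Definition countable {T : Type} (P : set T) : Prop :=
  exists f : T -> nat, forall x y, P x -> P y -> f x = f y -> x = y.

Definition uncountable {T : Type} (P : set T) : Prop := ~ countable P.

Definition universally_separable {Omega : Type} (Cl : set (set Omega)) : Prop :=
  exists Cl' : set (set Omega),
    (forall C, Cl' C -> Cl C) /\ countable Cl' /\
    forall C, Cl C -> exists s : nat -> set Omega,
      (forall n, Cl' (s n)) /\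
      forall x, exists n0, forall n, n0 <= n -> (s n x <-> C x).

Definition shatters_in {Omega : Type} (Cl : set (set Omega)) (X : set Omega)
  (A : list Omega) : Prop :=
  NoDup A /\ (forall a, In a A -> X a) /\
  forall J : set Omega, exists C, Cl C /\ forall a, In a A -> (C a <-> J a).

Definition VC_restr_le {Omega : Type} (Cl : set (set Omega)) (X : set Omega)
  (d : nat) : Prop :=
  forall A : list Omega, shatters_in Cl X A -> length A <= d.

Definition shatters_mod_omega1 {Omega : Type} (Cl : set (set Omega))
  (n : nat) (A : nat -> set Omega) : Prop :=
  (forall i, i < n -> uncountable (A i)) /\
  forall J : set nat, exists C, Cl C /\
    forall i, i < n ->
      (J i -> forall x, A i x -> C x) /\
      (~ J i -> forall x, A i x -> ~ C x).

Definition VC_mod_omega1_le {Omega : Type} (Cl : set (set Omega)) (d : nat) : Prop :=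
  forall n (A : nat -> set Omega), shatters_mod_omega1 Cl n A -> n <= d.

(* (2) -> (1): given n uncountable sets shattered mod omega_1, pick one
   point in each of them, all distinct and outside N (possible because each
   set is uncountable while N and the finitely many points already chosen
   are countable).  These n points are shattered by Cl inside Omega \ N.

   (1) -> (2) uses the countable dense subfamily Cl' with an injective code
   into nat.  A list L of 2^(d+1) codes "realizes" a tuple x_0..x_d when the
   k-th coded concept cuts out the bit pattern of k on the tuple.  If all d+1
   coordinate sets of the tuples realized by L were uncountable, they would
   be shattered mod omega_1, so for every L some coordinate set is countable;
   N is the union of these countably many countable sets.  Any d+1 points
   shattered outside N form a tuple realized by some L (approximate each
   cutting concept by Cl' on these finitely many points), hence one of them
   lies in N: contradiction. *)

From Stdlib Require Import List Arith Lia Classical ClassicalEpsilon Cantor.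
Import ListNotations.

Lemma cantor_pair_inj a b c d :
  Cantor.to_nat (a, b) = Cantor.to_nat (c, d) -> a = c /\ b = d.
Proof.
  intro H. apply (f_equal Cantor.of_nat) in H.
  rewrite !Cantor.cancel_of_to in H. now inversion H.
Qed.

Fixpoint list_code (l : list nat) : nat :=
  match l with
  | [] => 0
  | h :: t => S (Cantor.to_nat (h, list_code t))
  end.

Lemma list_code_inj l l' : list_code l = list_code l' -> l = l'.
Proof.
  revert l'; induction l as [|h t IH]; intros [|h' t'] H;
    simpl in H; try discriminate; auto.
  injection H as H. apply cantor_pair_inj in H as [-> Ht].
  now rewrite (IH t' Ht).
Qed.

Lemma countable_subset {T} (P Q : set T) :
  countable Q -> (forall x, P x -> Q x) -> countable P.
Proof. intros [f Hf] HPQ. exists f. auto. Qed.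

Lemma countable_indexed_union {I T : Type} (g : I -> nat)
  (g_inj : forall i j, g i = g j -> i = j) (P : I -> set T) :
  (forall i, countable (P i)) -> countable (fun y => exists i, P i y).
Proof.
  intros HP.
  destruct (choice _ HP) as [f f_inj].
  (* each point of the union is sent to (index, code inside that set) *)
  assert (witness : forall y, {i | P i y} + {~ exists i, P i y}).
  { intro y. destruct (excluded_middle_informative (exists i, P i y)) as [h|h].
    - left. exact (constructive_indefinite_description _ h).
    - now right. }
  exists (fun y => match witness y with
           | inleft (exist _ i _) => Cantor.to_nat (g i, f i y)
           | inright _ => 0
           end).
  intros x y Hx Hy E.
  destruct (witness x) as [[i Hi]|n]; [|exfalso; eauto].
  destruct (witness y) as [[j Hj]|n]; [|exfalso; eauto].
  apply cantor_pair_inj in E as [Eg Ef]. apply g_inj in Eg. subst j.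
  eapply f_inj; eauto.
Qed.

Lemma countable_union_list {T} (N : set T) (l : list T) :
  countable N -> countable (fun y => N y \/ In y l).
Proof.
  intro HN.
  apply countable_subset with (Q := fun y => exists o : option nat,
     match o with None => N y | Some j => nth_error l j = Some y end).
  - apply (countable_indexed_union
             (fun o => match o with None => 0 | Some j => S j end)).
    + intros [i|] [j|] H; simpl in H; try discriminate; congruence.
    + intros [j|]; auto. exists (fun _ => 0). intros x y Hx Hy _. congruence.
  - intros y [Hy|Hy].
    + now exists None.
    + apply In_nth_error in Hy as [j Hj]. now exists (Some j).
Qed.

Lemma uncountable_inhabited {T} (P : set T) : uncountable P -> exists x, P x.
Proof.
  intro H. apply NNPP. intro Hempty. apply H.
  exists (fun _ => 0). intros x y Hx. exfalso; eauto.
Qed.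

Lemma transversal_avoiding {T} (N : set T) (A : nat -> set T) (n : nat) :
  countable N -> (forall i, i < n -> uncountable (A i)) ->
  exists l, length l = n /\ NoDup l /\ (forall a, In a l -> ~ N a) /\
    forall i a, nth_error l i = Some a -> A i a.
Proof.
  intros HN HA. induction n as [|m IH].
  - exists []. repeat split; try constructor.
    + intros a [].
    + intros [|i] a H; discriminate.
  - destruct IH as [l (Hlen & Hnd & HnN & Hl)]; [intros; apply HA; lia|].
    (* A_m is not covered by the countable set N u l *)
    assert (exists a, A m a /\ ~ (N a \/ In a l)) as [a [Ha Hfresh]].
    { apply NNPP; intro Hcov. apply (HA m); [lia|].
      apply countable_subset with (Q := fun y => N y \/ In y l).
      - now apply countable_union_list.
      - intros x Hx. apply NNPP; intro. apply Hcov. eauto. }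
    exists (l ++ [a]). repeat split.
    + rewrite length_app; simpl; lia.
    + apply NoDup_app; auto.
      * repeat constructor. intros [].
      * intros x Hx [<-|[]]. auto.
    + intros x Hx. apply in_app_or in Hx as [Hx|[<-|[]]]; auto.
    + intros i b Hi. destruct (Nat.lt_ge_cases i (length l)).
      * rewrite nth_error_app1 in Hi; auto.
      * rewrite nth_error_app2 in Hi by lia.
        destruct (i - length l) as [|k] eqn:E; simpl in Hi.
        -- inversion Hi; subst b. now replace i with m by lia.
        -- destruct k; discriminate.
Qed.

Lemma transversal_shattered {Omega} (Cl : set (set Omega)) (X : set Omega)
  n (A : nat -> set Omega) (l : list Omega) :
  shatters_mod_omega1 Cl n A -> length l = n -> NoDup l ->
  (forall a, In a l -> X a) -> (forall i a, nth_error l i = Some a -> A i a) ->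
  shatters_in Cl X l.
Proof.
  intros [_ Hsh] Hlen Hnd HX Hl. repeat split; auto. intro J.
  destruct (Hsh (fun i => exists a, nth_error l i = Some a /\ J a))
    as [C [HC HCsep]].
  exists C. split; auto. intros a Ha.
  apply In_nth_error in Ha as [i Hi].
  assert (Hin : i < n) by (rewrite <- Hlen; apply nth_error_Some; congruence).
  destruct (HCsep i Hin) as [Hin_J Hout_J]. split.
  - intro Ca. apply NNPP; intro nJ.
    refine (Hout_J _ a (Hl _ _ Hi) Ca).
    intros [b [Hb Jb]]. rewrite Hi in Hb. inversion Hb; subst. auto.
  - intro Ja. exact (Hin_J (ex_intro _ a (conj Hi Ja)) a (Hl _ _ Hi)).
Qed.

Lemma VC_mod_omega1_of_countable_exception {Omega} (Cl : set (set Omega))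
  d (N : set Omega) :
  countable N -> VC_restr_le Cl (fun x => ~ N x) d -> VC_mod_omega1_le Cl d.
Proof.
  intros HN HVC n A Hsh.
  destruct (transversal_avoiding N A n HN (proj1 Hsh))
    as [l (Hlen & Hnd & HnN & Hl)].
  rewrite <- Hlen. apply HVC. eapply transversal_shattered; eauto.
Qed.

Lemma bit_patterns d (J : nat -> Prop) : exists k, k < 2 ^ S d /\
  forall i, i <= d -> (Nat.testbit k i = true <-> J i).
Proof.
  revert J; induction d as [|d IH]; intros J.
  - destruct (classic (J 0)) as [H|H]; [exists 1|exists 0];
      (split; [simpl; lia|]); intros i Hi; replace i with 0 by lia;
      simpl; split; intro; try discriminate; tauto.
  - destruct (IH (fun i => J (S i))) as [k [Hk HJ]].
    rewrite Nat.pow_succ_r'.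
    destruct (classic (J 0)) as [H|H]; [exists (2 * k + 1)|exists (2 * k)];
      (split; [lia|]); intros [|i] Hi.
    + rewrite Nat.testbit_odd_0; tauto.
    + rewrite Nat.testbit_odd_succ by lia. apply HJ; lia.
    + rewrite Nat.testbit_even_0. split; intro; [discriminate|tauto].
    + rewrite Nat.testbit_even_succ by lia. apply HJ; lia.
Qed.

Lemma eventually_uniform_on_finite {Omega} (s : nat -> set Omega)
  (C : set Omega) (x : nat -> Omega) d :
  (forall y, exists n0, forall n, n0 <= n -> (s n y <-> C y)) ->
  exists n0, forall i, i <= d -> forall n, n0 <= n -> (s n (x i) <-> C (x i)).
Proof.
  intros Hlim. induction d as [|d [n1 H1]].
  - destruct (Hlim (x 0)) as [n0 Hn]. exists n0.
    intros i Hi. now replace i with 0 by lia.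
  - destruct (Hlim (x (S d))) as [n2 H2].
    exists (max n1 n2). intros i Hi n Hn.
    destruct (Nat.eq_dec i (S d)) as [->|]; [apply H2|apply H1]; lia.
Qed.

Section CountableException.

Variables (Omega : Type) (Cl Cl' : set (set Omega)) (code : set Omega -> nat).
Hypothesis Cl'_sub : forall C, Cl' C -> Cl C.
Hypothesis code_inj : forall C C', Cl' C -> Cl' C' -> code C = code C' -> C = C'.
Hypothesis dense_approx : forall C, Cl C -> exists s : nat -> set Omega,
  (forall n, Cl' (s n)) /\
  forall x, exists n0, forall n, n0 <= n -> (s n x <-> C x).
Variable d : nat.

Definition realizes (L : list nat) (x : nat -> Omega) : Prop :=
  forall k, k < 2 ^ S d -> exists C, Cl' C /\ code C = nth k L 0 /\
    forall i, i <= d -> (C (x i) <-> Nat.testbit k i = true).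

Definition realized_coord (L : list nat) (i : nat) : set Omega :=
  fun y => exists x, realizes L x /\ x i = y.

Lemma realized_coord_pattern L k (C : set Omega) i y :
  k < 2 ^ S d -> Cl' C -> code C = nth k L 0 -> i <= d ->
  realized_coord L i y -> (C y <-> Nat.testbit k i = true).
Proof.
  intros Hk HC HcodeC Hi [x [Hx <-]].
  destruct (Hx k Hk) as [C' [HC' [HcodeC' HC'x]]].
  rewrite <- (code_inj C' C HC' HC ltac:(congruence)). auto.
Qed.

(* Bounded VC mod omega_1 forces, for every L, some countable coordinate
   set: otherwise the d+1 coordinate sets would be shattered mod omega_1. *)
Lemma realized_coord_countable :
  VC_mod_omega1_le Cl d ->
  forall L, exists i, i <= d /\ countable (realized_coord L i).
Proof.
  intros HVC L. apply NNPP. intro Hall.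
  assert (Hunc : forall i, i < S d -> uncountable (realized_coord L i)).
  { intros i Hi Hco. apply Hall. exists i. split; [lia|auto]. }
  enough (Hsh : shatters_mod_omega1 Cl (S d) (realized_coord L))
    by (specialize (HVC _ _ Hsh); lia).
  split; auto. intro J.
  destruct (bit_patterns d J) as [k [Hk HJ]].
  destruct (uncountable_inhabited _ (Hunc 0 ltac:(lia))) as [y0 [x [Hx _]]].
  destruct (Hx k Hk) as [C [HC [HcodeC _]]].
  exists C. split; [auto|]. intros i Hi.
  split; intros HJi y Hy;
    rewrite (realized_coord_pattern L k C i y Hk HC HcodeC ltac:(lia) Hy);
    rewrite HJ by lia; tauto.
Qed.

Lemma approx_on_finite (C : set Omega) (x : nat -> Omega) :
  Cl C -> exists C', Cl' C' /\ forall i, i <= d -> (C' (x i) <-> C (x i)).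
Proof.
  intro HC. destruct (dense_approx C HC) as [s [Hs Hlim]].
  destruct (eventually_uniform_on_finite s C x d Hlim) as [n0 Hn0].
  exists (s n0). split; [apply Hs|]. intros i Hi. exact (Hn0 i Hi n0 (le_n _)).
Qed.

Lemma shattered_tuple_realized (X : set Omega) (A : list Omega) (a0 : Omega) :
  shatters_in Cl X A -> S d <= length A ->
  exists L, realizes L (fun i => nth i A a0).
Proof.
  intros [Hnd [_ Hsh]] Hlen. set (x := fun i => nth i A a0).
  assert (Hpattern : forall k, exists C, Cl' C /\
            forall i, i <= d -> (C (x i) <-> Nat.testbit k i = true)).
  { intro k.
    destruct (Hsh (fun a => exists i, i <= d /\ x i = a /\ Nat.testbit k i = true))
      as [C [HC HCsep]].
    destruct (approx_on_finite C x HC) as [C' [HC' Hagree]].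
    exists C'. split; auto. intros i Hi.
    rewrite Hagree, HCsep by (auto; apply nth_In; lia). split.
    - intros [j [Hj [Hxj Hb]]].
      apply (proj1 (NoDup_nth A a0) Hnd) in Hxj; try lia. now subst.
    - intro Hb. eauto. }
  destruct (choice _ Hpattern) as [Ck HCk].
  exists (map (fun k => code (Ck k)) (seq 0 (2 ^ S d))).
  intros k Hk. exists (Ck k). repeat split; try apply HCk; auto.
  rewrite nth_indep with (d' := (fun k => code (Ck k)) 0)
    by (now rewrite length_map, length_seq).
  now rewrite (map_nth (fun k => code (Ck k)) (seq 0 (2 ^ S d)) 0 k), seq_nth.
Qed.

(* (1) -> (2): the union over all L of a countable coordinate set. *)
Lemma countable_exception_of_VC_mod_omega1 :
  VC_mod_omega1_le Cl d ->
  exists N : set Omega, countable N /\ VC_restr_le Cl (fun x => ~ N x) d.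
Proof.
  intro HVC.
  destruct (choice _ (realized_coord_countable HVC)) as [iL HiL].
  exists (fun y => exists L, realized_coord L (iL L) y). split.
  - apply (countable_indexed_union list_code list_code_inj).
    intro L. apply HiL.
  - intros A Hsh. apply NNPP; intro Hlen.
    destruct A as [|a0 A']; [simpl in Hlen; lia|].
    destruct (shattered_tuple_realized _ _ a0 Hsh ltac:(lia)) as [L HL].
    destruct (HiL L) as [Hi _].
    apply (proj1 (proj2 Hsh) (nth (iL L) (a0 :: A') a0)).
    + apply nth_In. lia.
    + exists L, (fun i => nth i (a0 :: A') a0). auto.
Qed.

End CountableException.

Theorem mainTheorem13 (Omega : Type) (Sigma : set (set Omega))
  (HSigma : is_sigma_algebra Sigma)
  (Cl : set (set Omega)) (Hmeas : forall C, Cl C -> Sigma C)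
  (Hsep : universally_separable Cl) (d : nat) :
  VC_mod_omega1_le Cl d <->
  exists N : set Omega, countable N /\
    VC_restr_le Cl (fun x => ~ N x) d.
Proof.
  destruct Hsep as [Cl' [Cl'_sub [[code code_inj] dense_approx]]].
  split.
  - exact (countable_exception_of_VC_mod_omega1
             Omega Cl Cl' code Cl'_sub code_inj dense_approx d).
  - intros [N [HN HVC]]. exact (VC_mod_omega1_of_countable_exception Cl d N HN HVC).
Qed.
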